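(* Let $X$ be a Banach space with a right dominant normalized 1-unconditional basis $(x_i)_i$, let $Y=\overline{\mathrm{span}}\{x_i^*\}$, and let $W=(X\oplus X)_\infty$ with basis $(w_i)_i$ given by $w_{2i-1}=(x_i,0)$, $w_{2i}=(0,x_i)$. Let $(e_i)_i$ be the unit vector basis of $J(X)$, $(\bar e_i)_i$ that of $J(W)$, and $s$, $\bar s$ the corresponding summing functionals. Then: (i) $(\bar e_{2i}-\bar e_{2i-1})_i$ is equivalent to $(x_i)_i$ and complemented in $J(W)$ via the projection $Qx=\sum_i\bar e_{2i}^*(x)(\bar e_{2i}-\bar e_{2i-1})$; (ii) $(\bar e_{2i-1})_i$ is equivalent to $(e_i)_i$ and complemented in $J(W)$ via $(I-Q)(x)=\sum_i(\bar e_{2i-1}^*(x)+\bar e_{2i}^*(x))\bar e_{2i-1}$. In particular $\widetilde X=\overline{\mathrm{span}}\{\bar e_{2i}-\bar e_{2i-1}\}$ is an ideal of $J(W)$ isomorphic as a Banach algebra to $X$, $\widetilde{J(X)}=\overline{\mathrm{span}}\{\bar e_{2i-1}\}$ is a subalgebra of $J(W)$ isomorphic as a Banach algebra to $J(X)$, and $J(W)=\widetilde X\oplus\widetilde{J(X)}$. (iii) $(\bar e_{2i}^* )_i$ is equivalent to $(x_i^* )_i$ and complemented in $\mathcal{J}_*(W)$ via $R(f)=\sum_i(f(\bar e_{2i})-f(\bar e_{2i-1}))\bar e_{2i}^*$; (iv) the sequence $(\bar s)^\frown(\bar e_{2i}^*+\bar e_{2i-1}^* )_i$ is equivalent to $(s)^\frown(e_i^*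 )_i$ and complemented in $\mathcal{J}_*(W)$ via the map $S$ with $S(\bar s)=\bar s$ and $S(f)=\sum_if(\bar e_{2i-1})(\bar e_{2i-1}^*+\bar e_{2i}^* )$ for $f\in\overline{\mathrm{span}}\{\bar e_i^*\}$. In particular $\widetilde Y=\overline{\mathrm{span}}\{\bar e_{2i}^*\}$ is an ideal of $\mathcal{J}_*(W)$ isomorphic as a Banach algebra to $Y$, $\widetilde{\mathcal{J}_*(Y)}=\mathbb{R}\bar s\oplus\overline{\mathrm{span}}\{\bar e_{2i-1}^*+\bar e_{2i}^*\}$ is a subalgebra of $\mathcal{J}_*(W)$ isomorphic as a Banach algebra to $\mathcal{J}_*(Y)$, and $\mathcal{J}_*(W)=\widetilde Y\oplus\widetilde{\mathcal{J}_*(Y)}$.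
   Context: An unconditional basis $(x_i)$ is right dominant if there is $C>0$ such that for all $1\le k_1\le m_1<k_2\le m_2<\cdots$ and eventually zero scalars, $\|\sum_ia_{m_i}x_{k_i}\|\le C\|\sum_ia_{m_i}x_{m_i}\|$. For a normalized Schauder basis $(z_i)$ of $Z$, the jamesification $J(Z)$ is the completion of $c_{00}$ under $\|\sum a_ie_i\|=\sup\{\|\sum_n(\sum_{i=k_n}^{m_n}a_i)z_{k_n}\|:1\le k_1\le m_1<k_2\le m_2<\cdots\}$, $(e_i)$ its unit vector basis with biorthogonals $(e_i^* )$, summing functional $s(\sum a_ie_i)=\sum a_i$, and $\mathcal{J}_*(Z)=\mathbb{R}s\oplus\overline{\mathrm{span}}\{e_i^*\}\subset J(Z)^*$. Algebra structures: $X$ and $Y$ use coordinate-wise multiplication with respect to $(x_i)$, $(x_i^* )$; $J(Z)$ uses coordinate-wise multiplication with respect to the difference basis $e_1,e_2-e_1,e_3-e_2,\dots$; $\mathcal{J}_*(Z)$ uses $(w^*\text{-}\sum a_ie_i^* )(w^*\text{-}\sum b_ie_i^* )=w^*\text{-}\sum a_ib_ie_i^*$ with identity $s$. Direct sums are topological direct sums of Banach spaces. *)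

(* Banach spaces with a basis are modelled by their norm on finitely
   supported coefficient sequences (c00); the spaces themselves are the
   completions. *)
From HB Require Import structures.
From mathcomp Require Import all_boot all_order all_algebra.
From mathcomp Require Import boolp classical_sets reals.
Set Implicit Arguments. Unset Strict Implicit. Unset Printing Implicit Defensive.
Import Order.TTheory GRing.Theory Num.Theory.
Local Open Scope ring_scope.
Local Open Scope classical_set_scope.

Section Defs.
Variable R : realType.
Implicit Types (a b c : nat -> R) (N : (nat -> R) -> R).

Definition vanish (n : nat) a := forall i, (n <= i)%N -> a i = 0.
Definition fsupp a := exists n, vanish n a.
Definition evec (i : nat) : nat -> R := fun j => if j == i then 1 else 0.

Definition c00_norm N :=
  (forall a, fsupp a -> 0 <= N a) /\
  (forall a, fsupp a -> N a = 0 -> forall i, a i = 0) /\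
  (forall (t : R) a, fsupp a -> N (fun i => t * a i) = `|t| * N a) /\
  (forall a b, fsupp a -> fsupp b -> N (fun i => a i + b i) <= N a + N b).

Definition normalized_1uncond N :=
  c00_norm N /\ (forall i, N (evec i) = 1) /\
  (forall a eps, fsupp a -> (forall i, eps i = 1 \/ eps i = -1) ->
     N (fun i => eps i * a i) = N a).

(* sum_{j<n} c_j x_{k_j} as a coefficient sequence *)
Definition place (k : nat -> nat) c (n : nat) : nat -> R :=
  fun i => \sum_(j < n | k j == i) c j.

Definition right_dominant N :=
  exists C : R, 0 < C /\
  forall (n : nat) (k m : nat -> nat) c,
    (forall j, (j < n)%N -> (k j <= m j)%N) ->
    (forall j, (j.+1 < n)%N -> (m j < k j.+1)%N) ->
    N (place k c n) <= C * N (place m c n).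

(* (X (+) X)_oo with w_{2i} = (x_i,0), w_{2i+1} = (0,x_i)  (0-indexed) *)
Definition Wnorm N : (nat -> R) -> R :=
  fun a => Num.max (N (fun i => a i.*2)) (N (fun i => a i.*2.+1)).

(* norm of Y = closed span of the biorthogonals (x_i^* ) in X^* *)
Definition dualnorm N b : R :=
  sup [set r | exists (n : nat) a, vanish n a /\ N a <= 1 /\
                 r = \sum_(i < n) b i * a i].

Fixpoint adm (l : seq (nat * nat)) : Prop :=
  match l with
  | [::] => True
  | p :: l' => (p.1 <= p.2)%N /\
      (match l' with [::] => True | q :: _ => (p.2 < q.1)%N end) /\ adm l'
  end.

(* sum_n (sum_{i=k_n}^{m_n} a_i) z_{k_n} *)
Definition jvec a (l : seq (nat * nat)) : nat -> R :=
  fun j => \sum_(p <- l | p.1 == j) \sum_(p.1 <= i < p.2.+1) a i.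

(* the norm of the jamesification J(Z) on c00 *)
Definition Jnorm N a : R :=
  sup [set r | exists l, adm l /\ r = N (jvec a l)].

(* elements of J_star(Z) = R s (+) span{e_i^*}: pairs (t, b) <-> t s + sum b_i e_i^*,
   with b finitely supported; norm = norm as functional on J(Z) *)
Definition Jsnorm N (f : R * (nat -> R)) : R :=
  sup [set r | exists (n : nat) a, vanish n a /\ Jnorm N a <= 1 /\
                 r = \sum_(i < n) (f.1 + f.2 i) * a i].

(* f(e_k) for f in J_star(Z) *)
Definition fev (f : R * (nat -> R)) (k : nat) : R := f.1 + f.2 k.

(* equivalence of two basic sequences, expressed on coefficients *)
Definition equiv_on (P : (nat -> R) -> Prop) (N1 N2 : (nat -> R) -> R) :=
  exists C : R, 0 < C /\ forall a, P a -> N1 a <= C * N2 a /\ N2 a <= C * N1 a.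

(* multiplication of J(Z): coordinatewise w.r.t. the difference basis
   d_0 = e_0, d_i = e_i - e_{i-1}.  For a vanishing from n on,
   a = sum_i tl n a i * d_i. *)
Definition tl (n : nat) a (i : nat) : R := \sum_(i <= j < n) a j.
Definition ofdiff (al : nat -> R) : nat -> R := fun i => al i - al i.+1.
Definition jmul (n : nat) a b : nat -> R := ofdiff (fun i => tl n a i * tl n b i).

(* multiplication of J_star(Z): coefficients of f=(t,b) in e_i^* (weak-star) are t + b_i *)
Definition pmul (f g : R * (nat -> R)) : R * (nat -> R) :=
  (f.1 * g.1, fun i => f.1 * g.2 i + f.2 i * g.1 + f.2 i * g.2 i).

(* sum_i c_i (e_{2i+1} - e_{2i}) *)
Definition dspread c : nat -> R := fun k => if odd k then c k./2 else - c k./2.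
(* sum_i c_i e_{2i} *)
Definition espread c : nat -> R := fun k => if odd k then 0 else c k./2.
(* sum_i b_i e_{2i+1}^* *)
Definition oddspread c : nat -> R := fun k => if odd k then c k./2 else 0.
(* sum_i b_i (e_{2i}^* + e_{2i+1}^* ) *)
Definition pairspread c : nat -> R := fun k => c k./2.

Definition Qop a : nat -> R := dspread (fun i => a i.*2.+1).
Definition Rop (f : R * (nat -> R)) : R * (nat -> R) :=
  (0, fun k => if odd k then fev f k - fev f k.-1 else 0).
(* S(s)=s and S(f) = sum_i f(e_{2i})(e_{2i}^*+e_{2i+1}^* ) on span{e_i^*} *)
Definition Sop (f : R * (nat -> R)) : R * (nat -> R) :=
  (f.1, fun k => f.2 (k./2).*2).

End Defs.

(* Coordinates 2i and 2i+1 of J(W) carry the two copies of X.  A block sum of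
   dspread c telescopes to at most two coefficients of c, and a block sum of
   espread d is a block sum of d.  Hence, after halving the indices, the even
   and odd parts of a Jamesification sum of dspread c (resp. espread d) are
   sums placed in X (resp. over blocks of J(X)) whose positions interlace only
   weakly; splitting them by parity makes the interlacing strict, so right
   dominance bounds them by a multiple of N c (resp. Jnorm d).  The reverse
   bounds come from single-coordinate blocks and from doubled blocks.  The
   dual statements follow by testing functionals of J_*(W) on dspread- and
   espread-vectors, and the algebraic ones are coordinatewise identities. *)

From HB Require Import structures.
From mathcomp Require Import all_boot all_order all_algebra.
From mathcomp Require Import boolp classical_sets reals.
From mathcomp Require Import ring lra zify.
Set Implicit Arguments. Unset Strict Implicit. Unset Printing Implicit Defensive.
Import Order.TTheory GRing.Theory Num.Theory.
Local Open Scope ring_scope.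
Local Open Scope classical_set_scope.

Section FiniteSupport.
Variable R : realType.
Implicit Types a b : nat -> R.

Lemma fsupp_vanish n a : vanish n a -> fsupp a.
Proof. by exists n. Qed.

Lemma fsupp0 : fsupp (fun _ => 0 : R).
Proof. by exists 0%N. Qed.

Lemma fsuppD a b : fsupp a -> fsupp b -> fsupp (fun i => a i + b i).
Proof.
case=> n an0 [m bm0]; exists (maxn n m) => i; rewrite geq_max => /andP[ni mi].
by rewrite an0 ?bm0 ?addr0.
Qed.

Lemma fsuppN a : fsupp a -> fsupp (fun i => - a i).
Proof. by case=> n an0; exists n => i ni; rewrite an0 ?oppr0. Qed.

Lemma fsuppMl g a : fsupp a -> fsupp (fun i => g i * a i).
Proof. by case=> n an0; exists n => i ni; rewrite an0 ?mulr0. Qed.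

Lemma fsupp_double a : fsupp a -> fsupp (fun i => a i.*2).
Proof. by case=> n an0; exists n => i ni; apply: an0; lia. Qed.

Lemma fsupp_doubleS a : fsupp a -> fsupp (fun i => a i.*2.+1).
Proof. by case=> n an0; exists n => i ni; apply: an0; lia. Qed.

End FiniteSupport.

Section Unconditional.
Variables (R : realType) (N : (nat -> R) -> R).
Hypothesis HN : normalized_1uncond N.
Implicit Types a b : nat -> R.

Lemma eq_N a b : a =1 b -> N a = N b.
Proof. by move=> /funext ->. Qed.

Lemma le_N_eqfun a b : a =1 b -> N a <= N b.
Proof. by move=> /eq_N ->. Qed.

Lemma N_ge0 a : fsupp a -> 0 <= N a.
Proof. by case: HN => -[+ _] _; apply. Qed.

Lemma NZ t a : fsupp a -> N (fun i => t * a i) = `|t| * N a.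
Proof. by case: HN => -[_ [_ [+ _]]] _; apply. Qed.

Lemma ler_ND a b : fsupp a -> fsupp b -> N (fun i => a i + b i) <= N a + N b.
Proof. by case: HN => -[_ [_ [_ +]]] _; apply. Qed.

Lemma N_evec i : N (evec R i) = 1.
Proof. by case: HN => _ [+ _]; apply. Qed.

Lemma N_sign a eps : fsupp a -> (forall i, eps i = 1 \/ eps i = -1) ->
  N (fun i => eps i * a i) = N a.
Proof. by case: HN => _ [_ +]; apply. Qed.

Lemma N0 : N (fun _ => 0) = 0.
Proof. by have := NZ 0 (@fsupp0 R); rewrite normr0 !mul0r. Qed.

Lemma NN a : fsupp a -> N (fun i => - a i) = N a.
Proof.
move=> fa; rewrite -[RHS]mul1r -(normrN1 R) -NZ //.
by apply: eq_N => i; rewrite mulN1r.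
Qed.

Lemma ler_NB a b : fsupp a -> fsupp b -> N (fun i => a i - b i) <= N a + N b.
Proof. by move=> fa fb; rewrite -(NN fb); apply: ler_ND => //; apply: fsuppN. Qed.

(* Averaging a with its image under the sign change -1 off P kills the
   coordinates outside P. *)
Lemma ler_N_restrict (P : pred nat) a : fsupp a ->
  N (fun i => if P i then a i else 0) <= N a.
Proof.
move=> fa; pose eps i : R := if P i then 1 else -1.
have eps_sign i : eps i = 1 \/ eps i = -1 by rewrite /eps; case: ifP; [left|right].
have -> : (fun i => if P i then a i else 0) = (fun i => 2^-1 * (a i + eps i * a i)).
  by apply: funext => i; rewrite /eps; case: ifP => _; [lra|rewrite mulN1r subrr mulr0].
rewrite NZ; last by apply: fsuppD => //; apply: fsuppMl.
have := ler_ND fa (fsuppMl eps fa); rewrite N_sign // ger0_norm ?invr_ge0 ?ler0n //.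
lra.
Qed.

Lemma N_single i x : N (fun j => if j == i then x else 0) = `|x|.
Proof.
have fe : fsupp (evec R i) by exists i.+1 => j ij; rewrite /evec; case: eqP => // ji; lia.
rewrite -[RHS]mulr1 -(N_evec i) -NZ //.
by apply: eq_N => j; rewrite /evec; case: eqP; rewrite ?mulr1 ?mulr0.
Qed.

Lemma ler_coord_N a i : fsupp a -> `|a i| <= N a.
Proof.
move=> fa; rewrite -(N_single i); apply: le_trans (ler_N_restrict (pred1 i) fa).
by apply: le_N_eqfun => j /=; case: eqP => // ->.
Qed.

Lemma ler_N_sum n a : vanish n a -> N a <= \sum_(i < n) `|a i|.
Proof.
elim: n a => [|n IHn] a an0.
  by rewrite big_ord0 (eq_N (b := fun _ => 0)) ?N0 // => i; apply: an0.
pose lo i := if (i < n)%N then a i else 0; pose hi i := if i == n then a n else 0.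
have a_split : a =1 (fun i => lo i + hi i).
  move=> i; rewrite /lo /hi; case: ltngtP => [//|ni|->]; rewrite ?addr0 ?add0r //.
  by rewrite an0.
rewrite (eq_N a_split); apply: le_trans (ler_ND _ _) _.
- by exists n => i; rewrite /lo ltnNge => ->.
- by exists n.+1 => i ni; rewrite /hi; case: eqP => // in_; lia.
rewrite big_ord_recr /= N_single lerD2r.
apply: le_trans (IHn _ _) _; first by move=> i; rewrite /lo ltnNge => ->.
by apply: ler_sum => i _; rewrite /lo ltn_ord.
Qed.

End Unconditional.

Section Place.
Variable R : realType.
Implicit Types (c : nat -> R) (k m : nat -> nat).

Definition increasing_on n k := forall j, (j.+1 < n)%N -> (k j < k j.+1)%N.
Definition injective_on n k :=
  forall j j', (j < n)%N -> (j' < n)%N -> k j = k j' -> j = j'.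

Lemma increasing_on_lt n k : increasing_on n k ->
  forall i j, (i < j)%N -> (j < n)%N -> (k i < k j)%N.
Proof.
move=> kinc i; elim=> // j IHj; rewrite ltnS leq_eqVlt => /orP[/eqP <-|ij] jn.
  exact: kinc.
exact: ltn_trans (IHj ij (ltnW jn)) (kinc _ jn).
Qed.

Lemma increasing_on_le n k : increasing_on n k ->
  forall i j, (i <= j)%N -> (j < n)%N -> (k i <= k j)%N.
Proof.
move=> kinc i j; rewrite leq_eqVlt => /orP[/eqP -> //|ij] jn.
exact: ltnW (increasing_on_lt kinc ij jn).
Qed.

Lemma increasing_on_inj n k : increasing_on n k -> injective_on n k.
Proof.
move=> kinc j j' jn j'n kjj'; case: (ltngtP j j') => // [jj'|j'j].
  by have := increasing_on_lt kinc jj' j'n; rewrite kjj' ltnn.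
by have := increasing_on_lt kinc j'j jn; rewrite kjj' ltnn.
Qed.

Lemma place_at n k c j : injective_on n k -> (j < n)%N -> place k c n (k j) = c j.
Proof.
move=> kinj jn; rewrite /place (bigD1 (Ordinal jn)) ?eqxx //= big1 ?addr0 //.
move=> j' /andP[/eqP kj' j'j]; exfalso; move/negP: j'j; apply; apply/eqP.
by apply: val_inj; apply: kinj (ltn_ord j') jn kj'.
Qed.

Lemma place_out n k c i : (forall j, (j < n)%N -> k j != i) -> place k c n i = 0.
Proof.
by move=> kni; rewrite /place big1 // => j /eqP kj; move: (kni j (ltn_ord j)); rewrite kj eqxx.
Qed.

Lemma fsupp_place k c n : fsupp (place k c n).
Proof.
exists (\max_(j < n) k j).+1 => i ki; apply: place_out => j jn.
apply/eqP => kj; move: ki; rewrite -kj ltnNge.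
by rewrite (leq_bigmax (F := fun j : 'I_n => k j) (Ordinal jn)).
Qed.

Lemma placeD k c1 c2 n i :
  place k (fun j => c1 j + c2 j) n i = place k c1 n i + place k c2 n i.
Proof. exact: big_split. Qed.

Lemma placeN k c n i : place k (fun j => - c j) n i = - place k c n i.
Proof. exact: sumrN. Qed.

Lemma placeB k c1 c2 n i :
  place k (fun j => c1 j - c2 j) n i = place k c1 n i - place k c2 n i.
Proof. by rewrite placeD placeN. Qed.

Lemma placeZ k t c n i : place k (fun j => t * c j) n i = t * place k c n i.
Proof. by rewrite /place mulr_sumr. Qed.

Lemma eq_place k k' c c' n i : (forall j, (j < n)%N -> k j = k' j /\ c j = c' j) ->
  place k c n i = place k' c' n i.
Proof.
move=> kk'; rewrite /place big_mkcond [RHS]big_mkcond; apply: eq_bigr => j _.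
by case: (kk' j (ltn_ord j)) => -> ->.
Qed.

Lemma place0 k c i : place k c 0 i = 0.
Proof. by rewrite /place big_ord0. Qed.

Lemma place_recr k c n i :
  place k c n.+1 i = place k c n i + (if k n == i then c n else 0).
Proof. by rewrite /place big_mkcond big_ord_recr -big_mkcond. Qed.

Lemma place1 k c i : place k c 1 i = if k 0%N == i then c 0%N else 0.
Proof. by rewrite place_recr place0 add0r. Qed.

Lemma place_double k c n i : place k c n i.*2 =
  place (fun j => (k j)./2) (fun j => if odd (k j) then 0 else c j) n i.
Proof.
rewrite /place big_mkcond [RHS]big_mkcond; apply: eq_bigr => j _.
have [kj|kj] := boolP (odd (k j)); last by congr (if _ then _ else _); lia.
by rewrite if_same; case: eqP => // kji; lia.
Qed.

Lemma place_doubleS k c n i : place k c n i.*2.+1 =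
  place (fun j => (k j)./2) (fun j => if odd (k j) then c j else 0) n i.
Proof.
rewrite /place big_mkcond [RHS]big_mkcond; apply: eq_bigr => j _.
have [kj|kj] := boolP (odd (k j)); first by congr (if _ then _ else _); lia.
by rewrite if_same; case: eqP => // kji; lia.
Qed.

Lemma place_filter n (P : pred nat) : exists n' (s : nat -> nat),
  [/\ forall i, (i < n')%N -> (s i < n)%N /\ P (s i), increasing_on n' s &
      forall k c x, place k (fun j => if P j then c j else 0) n x =
                    place (fun i => k (s i)) (fun i => c (s i)) n' x].
Proof.
elim: n => [|n [n' [s [sP sinc splace]]]].
  by exists 0%N, id; split=> // k c x; rewrite !place0.
case Pn: (P n); last first.
  exists n', s; split=> // [i i_n'|k c x].
    by case: (sP i i_n') => sin ?; split=> //; apply: ltnW.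
  by rewrite place_recr Pn splace if_same addr0.
exists n'.+1, (fun i => if (i < n')%N then s i else n); split.
- move=> i; rewrite ltnS leq_eqVlt => /orP[/eqP ->|i_n']; first by rewrite ltnn.
  by rewrite i_n'; case: (sP i i_n') => ? ?; split=> //; apply: ltnW.
- move=> j; rewrite ltnS => jn'; rewrite jn'.
  by case: (ltnP j.+1 n') => j1n'; [apply: sinc|case: (sP j jn')].
- move=> k c x; rewrite !place_recr ltnn Pn splace; congr (_ + _).
  by apply: eq_place => j ->.
Qed.

End Place.

Section Sums.
Variable R : realType.
Implicit Types g : nat -> R.

Lemma big_ord_vanish m n g : vanish m g -> (m <= n)%N ->
  \sum_(i < n) g i = \sum_(i < m) g i.
Proof.
move=> gm0 mn; rewrite [RHS](big_ord_widen n g mn) [RHS]big_mkcond.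
by apply: eq_bigr => i _; case: ltnP => // mi; rewrite gm0.
Qed.

Lemma ler_sum_abs_vanish m n g : vanish m g ->
  \sum_(i < n) `|g i| <= \sum_(i < m) `|g i|.
Proof.
move=> gm0; rewrite -(@big_ord_vanish m (m + n) (fun i => `|g i|)) ?leq_addr //; last first.
  by move=> i mi; rewrite gm0 ?normr0.
rewrite (big_ord_widen (m + n) (fun i => `|g i|) (leq_addl m n)) big_mkcond.
by apply: ler_sum => i _; case: ifP.
Qed.

Lemma big_ord_double n g : \sum_(i < n.*2) g i = \sum_(j < n) (g j.*2 + g j.*2.+1).
Proof.
elim: n => [|n IHn]; first by rewrite !big_ord0.
by rewrite doubleS !big_ord_recr /= IHn addrA.
Qed.

Lemma big_ord_double_vanish n g a : vanish n a ->
  \sum_(i < n) g i * a i = \sum_(j < n) (g j.*2 * a j.*2 + g j.*2.+1 * a j.*2.+1).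
Proof.
move=> an0; rewrite -(@big_ord_vanish n n.*2 (fun i => g i * a i)).
- exact: (big_ord_double n (fun i => g i * a i)).
- by move=> i ni; rewrite an0 ?mulr0.
- by rewrite -addnn leq_addr.
Qed.

End Sums.

Section Jamesification.
Variables (R : realType) (N : (nat -> R) -> R).
Hypothesis HN : normalized_1uncond N.
Implicit Types (a c : nat -> R) (k m : nat -> nat).

Definition block_sum a k m j : R := \sum_(k j <= i < (m j).+1) a i.

Definition admissible n k m := (forall j, (j < n)%N -> (k j <= m j)%N) /\
                               (forall j, (j.+1 < n)%N -> (m j < k j.+1)%N).

Lemma admissible_incr_starts n k m : admissible n k m -> increasing_on n k.
Proof. by case=> km mk j jn; apply: leq_ltn_trans (km j (ltnW jn)) (mk j jn). Qed.

Lemma admissible_incr_ends n k m : admissible n k m -> increasing_on n m.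
Proof. by case=> km mk j jn; apply: leq_trans (mk j jn) (km _ jn). Qed.

Definition blk_start (l : seq (nat * nat)) j := (nth (0, 0)%N l j).1.
Definition blk_end (l : seq (nat * nat)) j := (nth (0, 0)%N l j).2.

Lemma admP l : adm l <-> admissible (size l) (blk_start l) (blk_end l).
Proof.
elim: l => [|p l IHl] /=; first by split=> // _; split.
split.
  case=> p12 [pl /IHl [lkm lmk]]; split; first by case=> [|j] //= /lkm.
  case=> [|j] /= jl; last exact: lmk.
  by move: pl jl; case: l {IHl lkm lmk}.
case=> km mk; split; first exact: (km 0%N).
split; first by move: (mk 0%N); case: l {IHl km mk} => //= q l; apply.
by apply/IHl; split=> j jl; [apply: (km j.+1)|apply: (mk j.+1)].
Qed.

Lemma jvec_place a l :
  jvec a l = place (blk_start l) (block_sum a (blk_start l) (blk_end l)) (size l).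
Proof. by apply: funext => x; rewrite /jvec (big_nth (0, 0)%N) big_mkord. Qed.

Definition jsums a :=
  [set r | exists n k m, admissible n k m /\ r = N (place k (block_sum a k m) n)].

Lemma Jnorm_jsums a : Jnorm N a = sup (jsums a).
Proof.
congr sup; apply/seteqP; split=> r /=.
  by case=> l [/admP ladm ->]; exists (size l), (blk_start l), (blk_end l); rewrite jvec_place.
case=> n [k [m [kmadm ->]]]; pose l := mkseq (fun j => (k j, m j)) n.
have lkm j : (j < n)%N -> blk_start l j = k j /\ blk_end l j = m j.
  by move=> jn; rewrite /blk_start /blk_end nth_mkseq.
exists l; rewrite jvec_place size_mkseq; split.
  apply/admP; rewrite size_mkseq; case: kmadm => km mk; split=> j jn.
    by case: (lkm j jn) => -> ->; apply: km.
  by case: (lkm j (ltnW jn)) => _ ->; case: (lkm j.+1 jn) => -> _; apply: mk.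
congr N; apply: funext => x; apply: eq_place => j jn.
by case: (lkm j jn) => kj mj; rewrite /block_sum kj mj.
Qed.

Lemma ler_abs_block_sum a k m j na : vanish na a ->
  `|block_sum a k m j| <= \sum_(i < na) `|a i|.
Proof.
move=> an0; apply: le_trans (ler_norm_sum _ _ _) _.
apply: le_trans (ler_sum_abs_vanish (m j).+1 an0).
rewrite -(big_mkord xpredT (fun i => `|a i|)).
have sum_ge0 i j' : 0 <= \sum_(i <= l < j') `|a l| by apply: sumr_ge0.
case: (leqP (k j) (m j).+1) => kmj; last by rewrite [leLHS]big_geq ?(ltnW kmj) ?sum_ge0.
by rewrite [leRHS](@big_cat_nat _ _ _ (k j)) //= lerDr.
Qed.

Lemma vanish_place_block_sum a k m n na : vanish na a ->
  vanish na (place k (block_sum a k m) n).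
Proof.
move=> an0 x nax; rewrite /place big1 // => j /eqP kjx.
rewrite /block_sum big_nat_cond big1 // => i /andP[/andP[ki _] _].
by apply: an0; rewrite (leq_trans nax) // -kjx.
Qed.

Lemma jsums_bounded a : fsupp a -> has_ubound (jsums a).
Proof.
case=> na an0; exists (na%:R * \sum_(i < na) `|a i|) => _ [n [k [m [kmadm ->]]]].
apply: le_trans (ler_N_sum HN (vanish_place_block_sum k m n an0)) _.
apply: (@le_trans _ _ (\sum_(x < na) \sum_(i < na) `|a i|)); last first.
  by rewrite sumr_const card_ord mulr_natl.
apply: ler_sum => x _.
have [/existsP [j /eqP <-]|nox] := boolP [exists j : 'I_n, k j == x].
  rewrite place_at //; first exact: ler_abs_block_sum.
  exact/increasing_on_inj/admissible_incr_starts/kmadm.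
rewrite place_out ?normr0 ?sumr_ge0 // => j jn; apply: contraNneq nox => kjx.
by apply/existsP; exists (Ordinal jn); rewrite kjx.
Qed.

Lemma ler_Jnorm a n k m : fsupp a -> admissible n k m ->
  N (place k (block_sum a k m) n) <= Jnorm N a.
Proof.
move=> fa kmadm; rewrite Jnorm_jsums; apply: ub_le_sup; first exact: jsums_bounded.
by exists n, k, m.
Qed.

Lemma Jnorm_le a B :
  (forall n k m, admissible n k m -> N (place k (block_sum a k m) n) <= B) -> Jnorm N a <= B.
Proof.
move=> jB; rewrite Jnorm_jsums; apply: ge_sup => [|_ [n [k [m [kmadm ->]]]]]; last exact: jB.
by exists (N (place id (block_sum a id id) 0)), 0%N, id, id.
Qed.

Lemma Jnorm_ge0 a : fsupp a -> 0 <= Jnorm N a.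
Proof.
move=> fa; have adm0 : admissible 0 id id by [].
apply: le_trans (ler_Jnorm fa adm0).
by rewrite (eq_N N (b := fun _ => 0)) ?(N0 HN) // => x; rewrite place0.
Qed.

Lemma Jnorm0_le : Jnorm N (fun _ => 0) <= 0.
Proof.
apply: Jnorm_le => n k m _; rewrite (eq_N N (b := fun _ => 0)) ?(N0 HN) // => x.
by rewrite /place big1 // => j _; rewrite /block_sum big1.
Qed.

Lemma JnormZ_le t a : fsupp a -> Jnorm N (fun i => t * a i) <= `|t| * Jnorm N a.
Proof.
move=> fa; apply: Jnorm_le => n k m kmadm.
rewrite (eq_N N (b := fun x => t * place k (block_sum a k m) n x)); last first.
  by move=> x; rewrite -placeZ; apply: eq_place => j _; rewrite /block_sum mulr_sumr.
rewrite (NZ HN _ (fsupp_place _ _ _)); apply: ler_wpM2l => //; exact: ler_Jnorm.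
Qed.

Lemma ler_JnormB a b : fsupp a -> fsupp b ->
  Jnorm N (fun i => a i - b i) <= Jnorm N a + Jnorm N b.
Proof.
move=> fa fb; apply: Jnorm_le => n k m kmadm.
rewrite (eq_N N (b := fun x => place k (block_sum a k m) n x - place k (block_sum b k m) n x)).
  by apply: le_trans (ler_NB HN (fsupp_place _ _ _) (fsupp_place _ _ _)) _; apply: lerD;
    apply: ler_Jnorm.
by move=> x; rewrite -placeB; apply: eq_place => j _; rewrite /block_sum sumrB.
Qed.

Lemma ler_abs_block_Jnorm a i j : fsupp a -> (i <= j)%N ->
  `|\sum_(i <= l < j.+1) a l| <= Jnorm N a.
Proof.
move=> fa ij; have adm1 : admissible 1 (fun _ => i) (fun _ => j).
  by split=> [_ _ //|l]; rewrite ltnS ltn0.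
apply: le_trans (ler_Jnorm fa adm1); rewrite -(N_single HN i).
by apply: le_N_eqfun => x; rewrite place1 eq_sym.
Qed.

Lemma ler_coord_Jnorm a i : fsupp a -> `|a i| <= Jnorm N a.
Proof. by move=> fa; have := ler_abs_block_Jnorm fa (leqnn i); rewrite big_nat1. Qed.

Lemma ler_partial_sum_Jnorm a n : fsupp a -> `|\sum_(i < n) a i| <= Jnorm N a.
Proof.
move=> fa; case: n => [|n]; first by rewrite big_ord0 normr0 Jnorm_ge0.
by rewrite -(big_mkord xpredT); apply: ler_abs_block_Jnorm.
Qed.

Lemma Jsnorm_le (f : R * (nat -> R)) (B : R) : (forall n a, vanish n a -> Jnorm N a <= 1 ->
  \sum_(i < n) (f.1 + f.2 i) * a i <= B) -> Jsnorm N f <= B.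
Proof.
move=> fB; apply: ge_sup => [|_ [n [a [an0 [a1 ->]]]]]; last exact: fB.
exists 0, 0%N, (fun _ => 0); split=> //; split; last by rewrite big_ord0.
exact: le_trans Jnorm0_le ler01.
Qed.

(* The pairings are bounded by |t| + sum_i |b_i|, by the partial sum and
   coordinate bounds for Jnorm. *)
Lemma ler_Jsnorm (f : R * (nat -> R)) n a : fsupp f.2 -> vanish n a -> Jnorm N a <= 1 ->
  \sum_(i < n) (f.1 + f.2 i) * a i <= Jsnorm N f.
Proof.
case: f => t b /= [nb bnb0] an0 a1; apply: ub_le_sup; last by exists n, a.
exists (`|t| + \sum_(i < nb) `|b i|) => _ [n' [a' [a'n0 [a'1 ->]]]] /=.
have fa' := fsupp_vanish a'n0.
apply: le_trans (ler_norm _) _.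
under eq_bigr do rewrite mulrDl; rewrite big_split /= -mulr_sumr.
apply: le_trans (ler_normD _ _) _; apply: lerD.
  rewrite normrM -[leRHS]mulr1; apply: ler_wpM2l => //.
  exact: le_trans (ler_partial_sum_Jnorm _ fa') a'1.
apply: le_trans (ler_norm_sum _ _ _) (le_trans _ (ler_sum_abs_vanish n' bnb0)).
apply: ler_sum => i _; rewrite normrM -[leRHS]mulr1; apply: ler_wpM2l => //.
exact: le_trans (ler_coord_Jnorm _ fa') a'1.
Qed.

Lemma ler_Jsnorm_scaled (f : R * (nat -> R)) n a (L : R) : 0 < L -> fsupp f.2 ->
  vanish n a -> Jnorm N a <= L -> \sum_(i < n) (f.1 + f.2 i) * a i <= L * Jsnorm N f.
Proof.
move=> L_gt0 ff an0 aL; have La_n0 : vanish n (fun i => L^-1 * a i).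
  by move=> i ni; rewrite an0 ?mulr0.
have La1 : Jnorm N (fun i => L^-1 * a i) <= 1.
  apply: le_trans (JnormZ_le _ (fsupp_vanish an0)) _.
  by rewrite gtr0_norm ?invr_gt0 // ler_pdivrMl // mulr1.
rewrite -ler_pdivrMl //; apply: le_trans (ler_Jsnorm ff La_n0 La1).
by rewrite mulr_sumr; apply: ler_sum => i _; rewrite mulrCA.
Qed.

Lemma Jsnorm_ge0 (f : R * (nat -> R)) : fsupp f.2 -> 0 <= Jsnorm N f.
Proof.
move=> ff; have := @ler_Jsnorm f 0%N (fun _ => 0) ff (fun _ _ => erefl).
by rewrite big_ord0; apply; apply: le_trans Jnorm0_le ler01.
Qed.

End Jamesification.

Section Dual.
Variables (R : realType) (N : (nat -> R) -> R).
Hypothesis HN : normalized_1uncond N.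
Implicit Types a b : nat -> R.

Lemma dualnorm_le b (B : R) :
  (forall n a, vanish n a -> N a <= 1 -> \sum_(i < n) b i * a i <= B) -> dualnorm N b <= B.
Proof.
move=> bB; apply: ge_sup => [|_ [n [a [an0 [a1 ->]]]]]; last exact: bB.
by exists 0, 0%N, (fun _ => 0); rewrite big_ord0 (N0 HN) ler01.
Qed.

Lemma ler_dualnorm b n a : fsupp b -> vanish n a -> N a <= 1 ->
  \sum_(i < n) b i * a i <= dualnorm N b.
Proof.
case=> nb bnb0 an0 a1; apply: ub_le_sup; last by exists n, a.
exists (\sum_(i < nb) `|b i|) => _ [n' [a' [a'n0 [a'1 ->]]]] /=.
apply: le_trans (ler_norm _) _; apply: le_trans (ler_norm_sum _ _ _) _.
apply: le_trans (ler_sum_abs_vanish n' bnb0); apply: ler_sum => i _.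
rewrite normrM -[leRHS]mulr1; apply: ler_wpM2l => //.
exact: le_trans (ler_coord_N HN _ (fsupp_vanish a'n0)) a'1.
Qed.

Lemma dualnorm_ge0 b : fsupp b -> 0 <= dualnorm N b.
Proof.
move=> fb; have := @ler_dualnorm b 0%N (fun _ => 0) fb (fun _ _ => erefl).
by rewrite big_ord0 (N0 HN) ler01; apply.
Qed.

End Dual.

Section DirectSum.
Variables (R : realType) (N : (nat -> R) -> R).
Hypothesis HN : normalized_1uncond N.

Lemma Wnorm_evec i : Wnorm N (evec R i) = 1.
Proof.
have evec_half (s : nat -> nat) : (forall j, (s j == i) = (j == i./2)) ->
    (fun j => evec R i (s j)) = evec R i./2.
  by move=> si; apply: funext => j; rewrite /evec si.
have evec_off (s : nat -> nat) : (forall j, s j != i) -> (fun j => evec R i (s j)) = (fun _ => 0).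
  by move=> si; apply: funext => j; rewrite /evec (negbTE (si j)).
rewrite /Wnorm; have [iodd|ieven] := boolP (odd i).
  rewrite evec_off => [|j]; last by apply/eqP; lia.
  by rewrite evec_half => [|j]; [rewrite (N0 HN) (N_evec HN) max_r ?ler01|lia].
rewrite [X in Num.max _ (N X)]evec_off => [|j]; last by apply/eqP; lia.
by rewrite evec_half => [|j]; [rewrite (N0 HN) (N_evec HN) max_l ?ler01|lia].
Qed.

Lemma Wnorm_1uncond : normalized_1uncond (Wnorm N).
Proof.
split; [split; [|split; [|split]]|split]; rewrite /Wnorm.
- by move=> a fa; rewrite le_max (N_ge0 HN (fsupp_double fa)).
- move=> a fa; move/eqP; rewrite eq_le ge_max => /andP[/andP[Ne No] _] i.
  apply/normr0_eq0/eqP; rewrite eq_le normr_ge0 andbT -(odd_double_half i).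
  case: (odd i); rewrite /= ?add1n ?add0r.
    exact: le_trans (ler_coord_N HN i./2 (fsupp_doubleS fa)) No.
  exact: le_trans (ler_coord_N HN i./2 (fsupp_double fa)) Ne.
- move=> t a fa.
  by rewrite (NZ HN t (fsupp_double fa)) (NZ HN t (fsupp_doubleS fa)) maxr_pMr.
- move=> a b fa fb; rewrite ge_max; apply/andP; split.
    apply: le_trans (ler_ND HN (fsupp_double fa) (fsupp_double fb)) _.
    by apply: lerD; rewrite le_max lexx.
  apply: le_trans (ler_ND HN (fsupp_doubleS fa) (fsupp_doubleS fb)) _.
  by apply: lerD; rewrite le_max lexx orbT.
- exact: Wnorm_evec.
- move=> a eps fa eps_sign.
  have /= -> := N_sign HN (fsupp_double fa) (fun i => eps_sign i.*2).
  by have /= -> := N_sign HN (fsupp_doubleS fa) (fun i => eps_sign i.*2.+1).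
Qed.

End DirectSum.

Section RightDominance.
Variables (R : realType) (N : (nat -> R) -> R).
Hypothesis HN : normalized_1uncond N.
Implicit Types c : nat -> R.

Definition right_dominant_with (C : R) :=
  forall n k m c, admissible n k m -> N (place k c n) <= C * N (place m c n).

Lemma right_dominantP : right_dominant N -> exists2 C, 0 < C & right_dominant_with C.
Proof. by case=> C [C_gt0 rdC]; exists C => // n k m c [km mk]; apply: rdC. Qed.

Lemma ler_place_restrict (P : pred nat) q c n : injective_on n q ->
  N (place q (fun j => if P j then c j else 0) n) <= N (place q c n).
Proof.
move=> qinj; pose Q x := [exists j : 'I_n, P j && (q j == x)].
rewrite (eq_N N (b := fun x => if Q x then place q c n x else 0)).
  exact/(ler_N_restrict HN)/fsupp_place.
move=> x; case: ifP => [/existsP [j /andP[Pj /eqP <-]]|/negbT Qx].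
  by rewrite !place_at // Pj.
rewrite /place big1 // => j /eqP qjx; case: ifP => // Pj.
by move/negP: Qx; case; apply/existsP; exists j; rewrite Pj qjx eqxx.
Qed.

Lemma ler_place_select r c n : fsupp c -> injective_on n r ->
  N (place r (fun j => c (r j)) n) <= N c.
Proof.
move=> fc rinj; pose Q x := [exists j : 'I_n, r j == x].
rewrite (eq_N N (b := fun x => if Q x then c x else 0)); first exact: ler_N_restrict.
move=> x; case: ifP => [/existsP [j /eqP <-]|/negbT Qx]; first by rewrite place_at.
apply: place_out => j jn; apply: contraNneq Qx => rjx.
by apply/existsP; exists (Ordinal jn); rewrite rjx.
Qed.

Lemma ler_place_halved_starts n k c : increasing_on n k -> fsupp c ->
  N (place (fun j => (k j)./2) (fun j => if odd (k j) then c (k j)./2 else 0) n) <= N c.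
Proof.
move=> kinc fc; have [n' [s [sP sinc splace]]] := @place_filter R n (fun j => odd (k j)).
rewrite (eq_N N (splace _ (fun j => c (k j)./2))).
apply: (ler_place_select (r := fun i => (k (s i))./2)) => //.
apply: increasing_on_inj => i i_n'; have [si ki] := sP i (ltnW i_n').
have [si1 ki1] := sP i.+1 i_n'; have := increasing_on_lt kinc (sinc i i_n') si1; lia.
Qed.

Variable C : R.
Hypothesis C_ge0 : 0 <= C.
Hypothesis rdC : right_dominant_with C.

(* Keeping only the terms of one index parity makes the interlacing strict. *)
Lemma right_dominant_weak n p q c : increasing_on n p -> increasing_on n q ->
  (forall j, (j < n)%N -> (p j <= q j)%N) ->
  (forall j, (j.+1 < n)%N -> (q j <= p j.+1)%N) ->
  N (place p c n) <= 2 * C * N (place q c n).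
Proof.
move=> pinc qinc pq qp.
have parity_part (b : bool) :
    N (place p (fun j => if odd j == b then c j else 0) n) <= C * N (place q c n).
  have [n' [s [sP sinc splace]]] := @place_filter R n (fun j => odd j == b).
  rewrite (eq_N N (splace p c)); apply: le_trans (rdC _ _) _.
    split=> i i_n'; first by apply: pq; case: (sP i i_n').
    have [si /eqP sib] := sP i (ltnW i_n'); have [si1 /eqP si1b] := sP i.+1 i_n'.
    have si2 : ((s i).+2 <= s i.+1)%N by have := sinc i i_n'; lia.
    apply: leq_ltn_trans (qp (s i) _) _; first by lia.
    by apply: (increasing_on_lt pinc) => //; lia.
  apply: ler_wpM2l => //; rewrite -(eq_N N (splace q c)).
  exact/ler_place_restrict/increasing_on_inj.
rewrite (eq_N N (b := fun x => place p (fun j => if odd j == false then c j else 0) n x +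
                               place p (fun j => if odd j == true then c j else 0) n x)).
  apply: le_trans (ler_ND HN (fsupp_place _ _ _) (fsupp_place _ _ _)) _.
  by have := parity_part false; have := parity_part true; lra.
by move=> x; rewrite -placeD; apply: eq_place => j _; case: odd; rewrite ?addr0 ?add0r.
Qed.

(* For consecutive selected blocks j < j' the halved indices interlace weakly,
   (k j)/2 <= (m j)/2 <= (k j')/2, and the parity constraints make the halved
   starts and ends increasing. *)
Lemma ler_place_halved n k m (P : pred nat) (b : bool) c :
  admissible n k m -> fsupp c -> (forall j, P j -> odd (k j) = b /\ ~~ odd (m j)) ->
  N (place (fun j => (k j)./2) (fun j => if P j then c (m j)./2 else 0) n)
    <= 2 * C * N c.
Proof.
move=> kmadm fc Pkm; have [n' [s [sP sinc splace]]] := @place_filter R n P.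
rewrite (eq_N N (splace _ (fun j => c (m j)./2))).
have kinc := admissible_incr_starts kmadm; have minc := admissible_incr_ends kmadm.
have consecutive i : (i.+1 < n')%N -> [/\ (s i < s i.+1)%N, (s i.+1 < n)%N,
    odd (k (s i)) = b, odd (k (s i.+1)) = b & ~~ odd (m (s i)) /\ ~~ odd (m (s i.+1))].
  move=> i_n'; have [si Psi] := sP i (ltnW i_n'); have [si1 Psi1] := sP i.+1 i_n'.
  by have [? ?] := Pkm _ Psi; have [? ?] := Pkm _ Psi1; split=> //; apply: sinc.
apply: le_trans (@right_dominant_weak n' (fun i => (k (s i))./2) (fun i => (m (s i))./2)
  (fun i => c (m (s i))./2) _ _ _ _) _.
- move=> i /consecutive [si si1 kb kb' [_ _]]; have := increasing_on_lt kinc si si1; lia.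
- move=> i /consecutive [si si1 _ _ [mi mi1]]; have := increasing_on_lt minc si si1; lia.
- by move=> i /sP [si _]; have := kmadm.1 _ si; lia.
- move=> i /[dup] i_n' /consecutive [si si1 kb kb' [mi mi1]].
  have := kmadm.2 (s i) (leq_ltn_trans si si1).
  have := increasing_on_le kinc si si1; lia.
apply: ler_wpM2l; first by rewrite mulr_ge0.
apply: (ler_place_select (r := fun i => (m (s i))./2)) => //.
apply: increasing_on_inj => i /consecutive [si si1 _ _ [mi mi1]].
have := increasing_on_lt minc si si1; lia.
Qed.

End RightDominance.

Section Spread.
Variable R : realType.
Implicit Types c d : nat -> R.

Lemma parity_ind (P : nat -> Prop) :
  (forall i, P i.*2) -> (forall i, P i.*2.+1) -> forall k, P k.
Proof.
move=> Pe Po k; rewrite -(odd_double_half k).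
by case: odd; rewrite ?add1n; [apply: Po|apply: Pe].
Qed.

Lemma dspread_double c i : dspread c i.*2 = - c i.
Proof. by rewrite /dspread odd_double doubleK. Qed.

Lemma dspread_doubleS c i : dspread c i.*2.+1 = c i.
Proof. by rewrite /dspread /= odd_double uphalf_double. Qed.

Lemma espread_double c i : espread c i.*2 = c i.
Proof. by rewrite /espread odd_double doubleK. Qed.

Lemma espread_doubleS c i : espread c i.*2.+1 = 0.
Proof. by rewrite /espread /= odd_double. Qed.

Lemma oddspread_double c i : oddspread c i.*2 = 0.
Proof. by rewrite /oddspread odd_double. Qed.

Lemma oddspread_doubleS c i : oddspread c i.*2.+1 = c i.
Proof. by rewrite /oddspread /= odd_double uphalf_double. Qed.

Lemma pairspread_double c i : pairspread c i.*2 = c i.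
Proof. by rewrite /pairspread doubleK. Qed.

Lemma pairspread_doubleS c i : pairspread c i.*2.+1 = c i.
Proof. by rewrite /pairspread /= uphalf_double. Qed.

Lemma vanish_dspread n c : vanish n c -> vanish n.*2 (dspread c).
Proof. by move=> cn0 i ni; rewrite /dspread cn0 ?oppr0 ?if_same //; lia. Qed.

Lemma vanish_espread n c : vanish n c -> vanish n.*2 (espread c).
Proof. by move=> cn0 i ni; rewrite /espread cn0 ?if_same //; lia. Qed.

Lemma fsupp_dspread c : fsupp c -> fsupp (dspread c).
Proof. by case=> n cn0; exists n.*2; apply: vanish_dspread. Qed.

Lemma fsupp_espread c : fsupp c -> fsupp (espread c).
Proof. by case=> n cn0; exists n.*2; apply: vanish_espread. Qed.

Lemma fsupp_oddspread c : fsupp c -> fsupp (oddspread c).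
Proof. by case=> n cn0; exists n.*2 => i ni; rewrite /oddspread cn0 ?if_same //; lia. Qed.

Lemma fsupp_pairspread c : fsupp c -> fsupp (pairspread c).
Proof. by case=> n cn0; exists n.*2 => i ni; rewrite /pairspread cn0 //; lia. Qed.

(* The sum telescopes: only the two boundary pairs can be cut. *)
Lemma sum_dspread c a b : (a <= b)%N -> \sum_(a <= i < b.+1) dspread c i =
  (if odd a then c a./2 else 0) - (if odd b then 0 else c b./2).
Proof.
elim: b => [|b IHb] ab.
  by have -> : a = 0%N by [lia]; rewrite big_nat1 /dspread /= add0r.
case: (ltngtP a b.+1) ab => // [ab|->] _; last first.
  by rewrite big_nat1 /dspread; case: odd; rewrite ?subr0 ?add0r.
rewrite big_nat_recr /= ?IHb; [|lia|lia].
rewrite /dspread /=; case bodd: (odd b) => /=; first by rewrite subr0.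
by rewrite uphalf_half bodd add0n subrK subr0.
Qed.

Lemma sum_espread d a b : (a <= b)%N ->
  \sum_(a <= i < b) espread d i = \sum_((a.+1)./2 <= l < (b.+1)./2) d l.
Proof.
elim: b => [|b IHb] ab.
  by have -> : a = 0%N by [lia]; rewrite !big_geq.
case: (ltngtP a b.+1) ab => // [ab|->] _; last by rewrite !big_geq.
rewrite big_nat_recr ?IHb /espread; [|lia|lia].
case bodd: (odd b) => /=; first by rewrite addr0; congr (\sum_(_ <= _ < _) _); lia.
by rewrite (uphalf_half b) bodd add0n [RHS]big_nat_recr //; lia.
Qed.

End Spread.

Section Embeddings.
Variables (R : realType) (N : (nat -> R) -> R).
Hypothesis HN : normalized_1uncond N.
Let HW := Wnorm_1uncond HN.

Lemma ler_N_odd_JW a : fsupp a -> N (fun i => a i.*2.+1) <= Jnorm (Wnorm N) a.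
Proof.
move=> fa; have [na an0] := fa.
have adm : admissible na (fun j => j.*2.+1) (fun j => j.*2.+1) by split=> j _ //; lia.
have odd_inj : injective_on na (fun j => j.*2.+1) by move=> j j' _ _; lia.
apply: le_trans (ler_Jnorm HW fa adm); rewrite /Wnorm le_max; apply/orP; right.
apply: le_N_eqfun => i; case: (ltnP i na) => ina.
  by rewrite place_at // /block_sum big_nat1.
by rewrite an0 ?place_out // => [j jn|]; [apply/eqP|]; lia.
Qed.

Lemma Jnorm_le_JW_espread d : fsupp d -> Jnorm N d <= Jnorm (Wnorm N) (espread d).
Proof.
move=> fd; apply: Jnorm_le => n k m kmadm.
have adm2 : admissible n (fun j => (k j).*2) (fun j => (m j).*2).
  by case: kmadm => km mk; split=> j jn; [have := km j jn|have := mk j jn]; lia.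
apply: le_trans (ler_Jnorm HW (fsupp_espread fd) adm2).
rewrite /Wnorm le_max; apply/orP; left; rewrite (eq_N N (fun i => place_double _ _ _ i)).
apply: le_N_eqfun => i; apply: eq_place => j jn; rewrite odd_double doubleK; split=> //.
rewrite /block_sum sum_espread; last by have := kmadm.1 j jn; lia.
have -> : ((k j).*2.+1)./2 = k j by lia.
by have -> : ((m j).*2.+2)./2 = (m j).+1 by lia.
Qed.

Variable C : R.
Hypothesis C_ge0 : 0 <= C.
Hypothesis rdC : right_dominant_with N C.

Lemma N_dspread_even_le n k m c : admissible n k m -> fsupp c ->
  N (fun i => place k (block_sum (dspread c) k m) n i.*2) <= 2 * C * N c.
Proof.
move=> kmadm fc; rewrite (eq_N N (fun i => place_double _ _ _ i)).
rewrite (eq_N N (b := fun i => - place (fun j => (k j)./2)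
   (fun j => if ~~ odd (k j) && ~~ odd (m j) then c (m j)./2 else 0) n i)); last first.
  move=> i; rewrite -placeN; apply: eq_place => j jn; split=> //.
  rewrite /block_sum sum_dspread; last exact: kmadm.1.
  by case: (odd (k j)); case: (odd (m j)); rewrite /= ?subr0 ?sub0r ?oppr0.
rewrite (NN HN (fsupp_place _ _ _)).
apply: (ler_place_halved HN C_ge0 rdC (b := false) kmadm fc).
by move=> j /andP[kj mj]; split=> //; apply/negbTE.
Qed.

Lemma N_dspread_odd_le n k m c : admissible n k m -> fsupp c ->
  N (fun i => place k (block_sum (dspread c) k m) n i.*2.+1) <= (1 + 2 * C) * N c.
Proof.
move=> kmadm fc; rewrite (eq_N N (fun i => place_doubleS _ _ _ i)).
rewrite (eq_N N (b := fun i =>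
    place (fun j => (k j)./2) (fun j => if odd (k j) then c (k j)./2 else 0) n i -
    place (fun j => (k j)./2)
      (fun j => if odd (k j) && ~~ odd (m j) then c (m j)./2 else 0) n i)); last first.
  move=> i; rewrite -placeB; apply: eq_place => j jn; split=> //.
  rewrite /block_sum sum_dspread; last exact: kmadm.1.
  by case: (odd (k j)); case: (odd (m j)); rewrite /= ?subr0.
apply: le_trans (ler_NB HN (fsupp_place _ _ _) (fsupp_place _ _ _)) _.
rewrite mulrDl mul1r; apply: lerD.
  exact: (ler_place_halved_starts HN (admissible_incr_starts kmadm) fc).
apply: (ler_place_halved HN C_ge0 rdC (b := true) kmadm fc).
by move=> j /andP[kj mj].
Qed.

Lemma JW_dspread_le c : fsupp c -> Jnorm (Wnorm N) (dspread c) <= (1 + 2 * C) * N c.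
Proof.
move=> fc; apply: Jnorm_le => n k m kmadm; rewrite /Wnorm ge_max.
rewrite N_dspread_odd_le // andbT; apply: le_trans (N_dspread_even_le kmadm fc) _.
by apply: ler_wpM2r; [exact: N_ge0|rewrite lerDr].
Qed.

Lemma N_espread_even_le n k m d : admissible n k m -> fsupp d ->
  N (fun i => place k (block_sum (espread d) k m) n i.*2) <= Jnorm N d.
Proof.
move=> kmadm fd; have kinc := admissible_incr_starts kmadm.
rewrite (eq_N N (fun i => place_double _ _ _ i)).
rewrite (eq_N N (b := fun i => place (fun j => (k j)./2)
   (fun j => if ~~ odd (k j) then block_sum (espread d) k m j else 0) n i)); last first.
  by move=> i; apply: eq_place => j _; split=> //; case: odd.
have [n' [s [sP sinc splace]]] := @place_filter R n (fun j => ~~ odd (k j)).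
rewrite (eq_N N (splace _ _)).
have adm' : admissible n' (fun i => (k (s i))./2) (fun i => (m (s i))./2).
  split=> i i_n'; first by have [si _] := sP i i_n'; have := kmadm.1 _ si; lia.
  have [si ki] := sP i (ltnW i_n'); have [si1 ki1] := sP i.+1 i_n'; have ss := sinc i i_n'.
  have := kmadm.2 (s i) (leq_ltn_trans ss si1); have := increasing_on_le kinc ss si1; lia.
apply: le_trans (ler_Jnorm HN fd adm'); apply: le_N_eqfun => x.
apply: eq_place => i i_n'; split=> //; have [si ki] := sP i i_n'.
rewrite /block_sum sum_espread; last by have := kmadm.1 _ si; lia.
have -> : ((k (s i)).+1)./2 = (k (s i))./2 by lia.
by have -> : ((m (s i)).+2)./2 = ((m (s i))./2).+1 by lia.
Qed.

(* An odd start k marks the block that really starts at the coordinate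
   (k + 1)/2 of J(X); placing it at k/2 instead costs the weak right
   dominance constant. *)
Lemma N_espread_odd_le n k m d : admissible n k m -> fsupp d ->
  N (fun i => place k (block_sum (espread d) k m) n i.*2.+1) <= 2 * C * Jnorm N d.
Proof.
move=> kmadm fd; have kinc := admissible_incr_starts kmadm.
have bsum j : (j < n)%N ->
    block_sum (espread d) k m j = \sum_(((k j).+1)./2 <= l < ((m j).+2)./2) d l.
  by move=> jn; rewrite /block_sum sum_espread //; have := kmadm.1 j jn; lia.
rewrite (eq_N N (fun i => place_doubleS _ _ _ i)).
rewrite (eq_N N (b := fun i => place (fun j => (k j)./2) (fun j =>
    if odd (k j) && (k j < m j)%N then block_sum (espread d) k m j else 0) n i)); last first.
  move=> i; apply: eq_place => j jn; split=> //; case kj: (odd (k j)) => //=.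
  by case: (ltnP (k j) (m j)) => // mk; rewrite bsum // big_geq //; lia.
have [n' [s [sP sinc splace]]] := @place_filter R n (fun j => odd (k j) && (k j < m j)%N).
rewrite (eq_N N (splace _ _)).
have consecutive i : (i.+1 < n')%N ->
    ((k (s i)).+2 <= k (s i.+1))%N /\ (m (s i) < k (s i.+1))%N.
  move=> i_n'; have [si /andP[ki _]] := sP i (ltnW i_n').
  have [si1 /andP[ki1 _]] := sP i.+1 i_n'; have ss := sinc i i_n'.
  have := kmadm.2 (s i) (leq_ltn_trans ss si1).
  have := increasing_on_le kinc ss si1; have := increasing_on_lt kinc ss si1; lia.
apply: le_trans (@right_dominant_weak _ N HN C C_ge0 rdC n' (fun i => (k (s i))./2)
  (fun i => ((k (s i)).+1)./2) (fun i => block_sum (espread d) k m (s i)) _ _ _ _) _.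
- by move=> i /consecutive; lia.
- by move=> i /consecutive; lia.
- by move=> i _; lia.
- by move=> i /consecutive; lia.
have adm' : admissible n' (fun i => ((k (s i)).+1)./2) (fun i => (m (s i))./2).
  split=> i i_n'; first by have [_ /andP[ki kmi]] := sP i i_n'; lia.
  by have := consecutive i i_n'; lia.
apply: ler_wpM2l; first by rewrite mulr_ge0.
apply: le_trans (ler_Jnorm HN fd adm'); apply: le_N_eqfun => x.
by apply: eq_place => i i_n'; split=> //; rewrite bsum ?(sP i i_n').1.
Qed.

Lemma JW_espread_le d : fsupp d -> Jnorm (Wnorm N) (espread d) <= (1 + 2 * C) * Jnorm N d.
Proof.
move=> fd; have Jd := Jnorm_ge0 HN fd.
apply: Jnorm_le => n k m kmadm; rewrite /Wnorm ge_max; apply/andP; split.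
  apply: le_trans (N_espread_even_le kmadm fd) _.
  by rewrite -[leLHS]mul1r; apply: ler_wpM2r; rewrite // lerDl mulr_ge0.
by apply: le_trans (N_espread_odd_le kmadm fd) _; apply: ler_wpM2r; rewrite // lerDr.
Qed.

End Embeddings.

Section Algebra.
Variable R : realType.
Implicit Types (a b c d : nat -> R) (f : R * (nat -> R)).

Lemma Qop_dspread c : Qop (dspread c) = dspread c.
Proof. by rewrite /Qop; congr dspread; apply: funext => i; rewrite dspread_doubleS. Qed.

Lemma subr_Qop a : (fun k => a k - Qop a k) = espread (fun i => a i.*2 + a i.*2.+1).
Proof.
apply: funext; elim/parity_ind => i; rewrite /Qop.
  by rewrite dspread_double espread_double opprK.
by rewrite dspread_doubleS espread_doubleS subrr.
Qed.

Lemma dspread_eq_espread c d : dspread c = espread d -> forall i, c i = 0 /\ d i = 0.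
Proof.
move=> cd i; have := congr1 (fun x => x i.*2.+1) cd; have := congr1 (fun x => x i.*2) cd.
rewrite /= dspread_double dspread_doubleS espread_double espread_doubleS => <- ci0.
by rewrite ci0 oppr0.
Qed.

Lemma tl_dspread n c i : vanish n (dspread c) -> tl n (dspread c) i = if odd i then c i./2 else 0.
Proof.
move=> cn0; rewrite /tl; case: (ltnP i n) => [|ni]; last first.
  by rewrite big_geq //; case iodd: (odd i) => //; have := cn0 i ni; rewrite /dspread iodd.
case: n cn0 => // n cn0 in_; rewrite sum_dspread //.
case nodd: (odd n); first by rewrite subr0.
have := cn0 n.+1 (leqnn _); rewrite /dspread /= nodd /= uphalf_half nodd add0n.
by move=> ->; rewrite subr0.
Qed.

Lemma jmul_dspread n c b : vanish n (dspread c) ->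
  jmul n (dspread c) b = dspread (fun j => c j * tl n b j.*2.+1).
Proof.
move=> cn0; apply: funext; elim/parity_ind => i; rewrite /jmul /ofdiff !tl_dspread //=.
  by rewrite dspread_double odd_double /= uphalf_double mul0r sub0r.
by rewrite dspread_doubleS odd_double /= uphalf_double mul0r subr0.
Qed.

Lemma jmul_dspreadM n c c' : vanish n (dspread c) -> vanish n (dspread c') ->
  jmul n (dspread c) (dspread c') = dspread (fun i => c i * c' i).
Proof.
move=> cn0 c'n0; rewrite jmul_dspread //; congr dspread; apply: funext => j.
by rewrite tl_dspread //= odd_double uphalf_double.
Qed.

Lemma tl_espread m a i : tl m.*2 (espread a) i = tl m a (i.+1)./2.
Proof.
rewrite /tl; case: (leqP i m.*2) => im; last by rewrite !big_geq //; lia.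
by rewrite sum_espread // (_ : (m.*2.+1)./2 = m) //; lia.
Qed.

Lemma jmul_espread m a b : jmul m.*2 (espread a) (espread b) = espread (jmul m a b).
Proof.
apply: funext; elim/parity_ind => i; rewrite /jmul /ofdiff !tl_espread /espread /=.
  by rewrite odd_double /= uphalf_double doubleK.
by rewrite odd_double /= doubleK uphalf_double subrr.
Qed.

Lemma Rop_oddspread b : Rop (0, oddspread b) = (0, oddspread b).
Proof.
congr pair; apply: funext => k; rewrite /fev /oddspread /=.
by case kodd: (odd k) => //; rewrite (_ : odd k.-1 = false) ?add0r ?subr0 //; lia.
Qed.

Lemma Sop_pairspread (t : R) b : Sop (t, pairspread b) = (t, pairspread b).
Proof. by congr pair; apply: funext => k; rewrite /pairspread /= doubleK. Qed.

Lemma pmul_oddspreadl b f :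
  pmul (0, oddspread b) f = (0, oddspread (fun j => b j * fev f j.*2.+1)).
Proof.
rewrite /pmul /fev /= mul0r; congr pair; apply: funext => i.
elim/parity_ind: i => i; rewrite /oddspread /= odd_double /=.
  by rewrite !mul0r !addr0.
by rewrite mul0r add0r uphalf_double mulrDr.
Qed.

Lemma pmul_oddspread b b' :
  pmul (0, oddspread b) (0, oddspread b') = (0, oddspread (fun i => b i * b' i)).
Proof.
rewrite /pmul /= mul0r; congr pair; apply: funext => i; rewrite /oddspread.
by case: (odd i); rewrite ?mul0r ?mulr0 ?add0r.
Qed.

Lemma Rop_add_Sop f :
  f.1 = (Rop f).1 + (Sop f).1 /\ forall k, f.2 k = (Rop f).2 k + (Sop f).2 k.
Proof.
split=> [|k]; first by rewrite add0r.
rewrite /Rop /Sop /fev /=; elim/parity_ind: k => i /=; rewrite odd_double /=.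
  by rewrite doubleK add0r.
by rewrite uphalf_double; ring.
Qed.

Lemma oddspread_eq_pairspread b (t : R) d : (0, oddspread b) = (t, pairspread d) ->
  t = 0 /\ forall i, b i = 0 /\ d i = 0.
Proof.
case=> <- bd; split=> // i; have := congr1 (fun x => x i.*2.+1) bd.
have := congr1 (fun x => x i.*2) bd.
rewrite /= oddspread_double oddspread_doubleS pairspread_double pairspread_doubleS.
by move=> <- ->.
Qed.

End Algebra.

Section Proposition.
Variables (R : realType) (N : (nat -> R) -> R).
Hypothesis HN : normalized_1uncond N.
Variable C : R.
Hypothesis C_gt0 : 0 < C.
Hypothesis rdC : right_dominant_with N C.
Let C_ge0 : 0 <= C := ltW C_gt0.
Let HW := Wnorm_1uncond HN.
Local Notation JW := (Jnorm (Wnorm N)).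

Let K_ge1 : 1 <= 1 + 2 * C.
Proof. by rewrite lerDl mulr_ge0. Qed.

Let K_gt0 : 0 < 1 + 2 * C.
Proof. exact: lt_le_trans ltr01 K_ge1. Qed.

Let K'_gt0 : 0 < 2 + 2 * C.
Proof. by rewrite ltr_wpDr ?mulr_ge0 ?ltr0n. Qed.

Lemma dspread_equiv : equiv_on (@fsupp R) N (fun c => JW (dspread c)).
Proof.
exists (1 + 2 * C); split=> // c fc; split; last exact: JW_dspread_le.
have := ler_N_odd_JW HN (fsupp_dspread fc).
rewrite (eq_N N (b := c)) => [cJ|i]; last exact: dspread_doubleS.
apply: le_trans cJ _; rewrite -[leLHS]mul1r; apply: ler_wpM2r => //.
exact (Jnorm_ge0 HW (fsupp_dspread fc)).
Qed.

Lemma JW_Qop_le a : fsupp a -> JW (Qop a) <= (1 + 2 * C) * JW a.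
Proof.
move=> fa; apply: le_trans (JW_dspread_le HN C_ge0 rdC (fsupp_doubleS fa)) _.
by apply: ler_wpM2l; [exact: ltW|exact: ler_N_odd_JW].
Qed.

Lemma espread_equiv : equiv_on (@fsupp R) (Jnorm N) (fun d => JW (espread d)).
Proof.
exists (1 + 2 * C); split=> // d fd; split; last exact: JW_espread_le.
apply: le_trans (Jnorm_le_JW_espread HN fd) _; rewrite -[leLHS]mul1r.
by apply: ler_wpM2r => //; exact (Jnorm_ge0 HW (fsupp_espread fd)).
Qed.

Lemma JW_espread_pairsum_le a : fsupp a ->
  JW (espread (fun i => a i.*2 + a i.*2.+1)) <= (2 + 2 * C) * JW a.
Proof.
move=> fa; rewrite -subr_Qop.
apply: le_trans (ler_JnormB HW fa (fsupp_dspread (fsupp_doubleS fa))) _.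
by have := JW_Qop_le fa; rewrite /Qop; lra.
Qed.

Lemma Jsnorm_Rop_le f : fsupp f.2 ->
  Jsnorm (Wnorm N) (Rop f) <= (1 + 2 * C) * Jsnorm (Wnorm N) f.
Proof.
move=> ff; apply: (Jsnorm_le HW) => n a an0 a1.
pose c i := a i.*2.+1; have cn0 : vanish n c by move=> i ni; rewrite /c an0 //; lia.
have dc_le : JW (dspread c) <= 1 + 2 * C.
  apply: le_trans (JW_dspread_le HN C_ge0 rdC (fsupp_vanish cn0)) _.
  rewrite -[leRHS]mulr1; apply: ler_wpM2l; first exact: ltW.
  exact: le_trans (ler_N_odd_JW HN (fsupp_vanish an0)) a1.
have -> : \sum_(i < n) ((Rop f).1 + (Rop f).2 i) * a i =
          \sum_(i < n.*2) (f.1 + f.2 i) * dspread c i.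
  rewrite (big_ord_double_vanish (fun i => (Rop f).1 + (Rop f).2 i) an0).
  rewrite (big_ord_double n (fun i => (f.1 + f.2 i) * dspread c i)).
  apply: eq_bigr => j _; rewrite dspread_double dspread_doubleS /Rop /fev /c /=.
  by rewrite odd_double /=; ring.
exact (ler_Jsnorm_scaled HW K_gt0 ff (vanish_dspread cn0) dc_le).
Qed.

Lemma Jsnorm_Sop_le f : fsupp f.2 ->
  Jsnorm (Wnorm N) (Sop f) <= (2 + 2 * C) * Jsnorm (Wnorm N) f.
Proof.
move=> ff; apply: (Jsnorm_le HW) => n a an0 a1.
pose y i := a i.*2 + a i.*2.+1.
have yn0 : vanish n y by move=> i ni; rewrite /y !an0 ?addr0 //; lia.
have ey_le : JW (espread y) <= 2 + 2 * C.
  apply: le_trans (JW_espread_pairsum_le (fsupp_vanish an0)) _.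
  by rewrite -[leRHS]mulr1; apply: ler_wpM2l; first exact: ltW.
have -> : \sum_(i < n) ((Sop f).1 + (Sop f).2 i) * a i =
          \sum_(i < n.*2) (f.1 + f.2 i) * espread y i.
  rewrite (big_ord_double_vanish (fun i => (Sop f).1 + (Sop f).2 i) an0).
  rewrite (big_ord_double n (fun i => (f.1 + f.2 i) * espread y i)).
  apply: eq_bigr => j _; rewrite espread_double espread_doubleS /Sop /y /=.
  by rewrite doubleK uphalf_double; ring.
exact (ler_Jsnorm_scaled HW K'_gt0 ff (vanish_espread yn0) ey_le).
Qed.

Lemma Jsnorm_oddspread_le b : fsupp b -> Jsnorm (Wnorm N) (0, oddspread b) <= dualnorm N b.
Proof.
move=> fb; apply: (Jsnorm_le HW) => n a an0 a1 /=.
rewrite (big_ord_double_vanish (fun i => 0 + oddspread b i) an0).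
under eq_bigr do rewrite oddspread_double oddspread_doubleS !add0r mul0r add0r.
apply: (ler_dualnorm HN (a := fun j => a j.*2.+1) fb) => [i ni|]; first by rewrite an0 //; lia.
exact: le_trans (ler_N_odd_JW HN (fsupp_vanish an0)) a1.
Qed.

Lemma dualnorm_le_Jsnorm_oddspread b : fsupp b ->
  dualnorm N b <= (1 + 2 * C) * Jsnorm (Wnorm N) (0, oddspread b).
Proof.
move=> fb; apply: (dualnorm_le HN) => n a an0 a1.
have da_le : JW (dspread a) <= 1 + 2 * C.
  apply: le_trans (JW_dspread_le HN C_ge0 rdC (fsupp_vanish an0)) _.
  by rewrite -[leRHS]mulr1; apply: ler_wpM2l => //; exact: ltW.
have -> : \sum_(i < n) b i * a i =
    \sum_(i < n.*2) (0 + oddspread b i) * dspread a i.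
  rewrite (big_ord_double n (fun i => (0 + oddspread b i) * dspread a i)).
  apply: eq_bigr => j _; rewrite /= oddspread_double oddspread_doubleS.
  by rewrite dspread_double dspread_doubleS !add0r mul0r add0r.
exact (ler_Jsnorm_scaled HW (f := (0, oddspread b)) K_gt0 (fsupp_oddspread fb)
  (vanish_dspread an0) da_le).
Qed.

Lemma oddspread_equiv :
  equiv_on (@fsupp R) (dualnorm N) (fun b => Jsnorm (Wnorm N) (0, oddspread b)).
Proof.
exists (1 + 2 * C); split=> // b fb; split; first exact: dualnorm_le_Jsnorm_oddspread.
apply: le_trans (Jsnorm_oddspread_le fb) _; rewrite -[leLHS]mul1r.
by apply: ler_wpM2r => //; apply: dualnorm_ge0.
Qed.

Lemma Jsnorm_pairspread_le (t : R) b : fsupp b ->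
  Jsnorm (Wnorm N) (t, pairspread b) <= (2 + 2 * C) * Jsnorm N (t, b).
Proof.
move=> fb; apply: (Jsnorm_le HW) => n a an0 a1.
pose y i := a i.*2 + a i.*2.+1.
have yn0 : vanish n y by move=> i ni; rewrite /y !an0 ?addr0 //; lia.
have y_le : Jnorm N y <= 2 + 2 * C.
  apply: le_trans (Jnorm_le_JW_espread HN (fsupp_vanish yn0)) _.
  apply: le_trans (JW_espread_pairsum_le (fsupp_vanish an0)) _.
  by rewrite -[leRHS]mulr1; apply: ler_wpM2l; first exact: ltW.
have -> : \sum_(i < n) ((t, pairspread b).1 + (t, pairspread b).2 i) * a i =
          \sum_(j < n) ((t, b).1 + (t, b).2 j) * y j.
  rewrite (big_ord_double_vanish (fun i => (t, pairspread b).1 + (t, pairspread b).2 i) an0).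
  by apply: eq_bigr => j _; rewrite /= pairspread_double pairspread_doubleS /y mulrDr.
exact (ler_Jsnorm_scaled HN (f := (t, b)) K'_gt0 fb yn0 y_le).
Qed.

Lemma Jsnorm_le_pairspread (t : R) b : fsupp b ->
  Jsnorm N (t, b) <= (1 + 2 * C) * Jsnorm (Wnorm N) (t, pairspread b).
Proof.
move=> fb; apply: (Jsnorm_le HN) => n d dn0 d1.
have ed_le : JW (espread d) <= 1 + 2 * C.
  apply: le_trans (JW_espread_le HN C_ge0 rdC (fsupp_vanish dn0)) _.
  by rewrite -[leRHS]mulr1; apply: ler_wpM2l => //; exact: ltW.
have -> : \sum_(i < n) ((t, b).1 + (t, b).2 i) * d i =
    \sum_(i < n.*2) ((t, pairspread b).1 + (t, pairspread b).2 i) * espread d i.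
  rewrite (big_ord_double n (fun i => ((t, pairspread b).1 + (t, pairspread b).2 i) * espread d i)).
  apply: eq_bigr => j _; rewrite /= pairspread_double pairspread_doubleS.
  by rewrite espread_double espread_doubleS mulr0 addr0.
exact (ler_Jsnorm_scaled HW (f := (t, pairspread b)) K_gt0 (fsupp_pairspread fb)
  (vanish_espread dn0) ed_le).
Qed.

Lemma pairspread_equiv (t : R) b : fsupp b ->
  Jsnorm (Wnorm N) (t, pairspread b) <= (2 + 2 * C) * Jsnorm N (t, b) /\
  Jsnorm N (t, b) <= (2 + 2 * C) * Jsnorm (Wnorm N) (t, pairspread b).
Proof.
move=> fb; split; first exact: Jsnorm_pairspread_le.
apply: le_trans (Jsnorm_le_pairspread t fb) _; apply: ler_wpM2r.
  exact (Jsnorm_ge0 HW (f := (t, pairspread b)) (fsupp_pairspread fb)).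
by rewrite lerD2r ler1n.
Qed.

End Proposition.

Unset Implicit Arguments. Set Strict Implicit. Set Printing Implicit Defensive.

Theorem proposition1p25 (R : realType) (N : (nat -> R) -> R)
  (HX : normalized_1uncond N) (Hrd : right_dominant N) :
  (* (i) (e_{2i}-e_{2i-1}) ~ (x_i), complemented by the bounded projection Q *)
  equiv_on (@fsupp R) N (fun c => Jnorm (Wnorm N) (dspread c)) /\
  (exists C : R, 0 < C /\ forall a : nat -> R, fsupp a ->
     Jnorm (Wnorm N) (Qop a) <= C * Jnorm (Wnorm N) a) /\
  (forall c : nat -> R, Qop (dspread c) = dspread c) /\
  (* (ii) (e_{2i-1}) ~ (e_i), complemented by I - Q *)
  equiv_on (@fsupp R) (Jnorm N) (fun c => Jnorm (Wnorm N) (espread c)) /\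
  (forall a : nat -> R, (fun k => a k - Qop a k) = espread (fun i => a i.*2 + a i.*2.+1)) /\
  (* X~ is an ideal of J(W), isomorphic as an algebra to X *)
  (forall n (c b : nat -> R), vanish n (dspread c) -> vanish n b ->
     exists c', jmul n (dspread c) b = dspread c') /\
  (forall n (c c' : nat -> R), vanish n (dspread c) -> vanish n (dspread c') ->
     jmul n (dspread c) (dspread c') = dspread (fun i => c i * c' i)) /\
  (* J(X)~ is a subalgebra of J(W), isomorphic as an algebra to J(X) *)
  (forall m (a b : nat -> R), vanish m a -> vanish m b ->
     jmul m.*2 (espread a) (espread b) = espread (jmul m a b)) /\
  (* J(W) = X~ (+) J(X)~ *)
  (forall c d : nat -> R, dspread c = espread d -> forall i, c i = 0 /\ d i = 0) /\
  (* (iii) (e_{2i}^* ) ~ (x_i^* ), complemented by the bounded projection R *)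
  equiv_on (@fsupp R) (dualnorm N) (fun b => Jsnorm (Wnorm N) (0, oddspread b)) /\
  (exists C : R, 0 < C /\ forall f : R * (nat -> R), fsupp f.2 ->
     Jsnorm (Wnorm N) (Rop f) <= C * Jsnorm (Wnorm N) f) /\
  (forall b : nat -> R, Rop (0, oddspread b) = (0, oddspread b)) /\
  (* (iv) (s)^(e_{2i-1}^* + e_{2i}^* ) ~ (s)^(e_i^* ), complemented by S *)
  (exists C : R, 0 < C /\ forall (t : R) (b : nat -> R), fsupp b ->
     Jsnorm (Wnorm N) (t, pairspread b) <= C * Jsnorm N (t, b) /\
     Jsnorm N (t, b) <= C * Jsnorm (Wnorm N) (t, pairspread b)) /\
  (exists C : R, 0 < C /\ forall f : R * (nat -> R), fsupp f.2 ->
     Jsnorm (Wnorm N) (Sop f) <= C * Jsnorm (Wnorm N) f) /\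
  (forall (t : R) (b : nat -> R), Sop (t, pairspread b) = (t, pairspread b)) /\
  (forall f : R * (nat -> R), Sop f = (f.1, pairspread (fun i => f.2 i.*2))) /\
  (* Y~ is an ideal of J_star(W), isomorphic as an algebra to Y *)
  (forall (b : nat -> R) (f : R * (nat -> R)), exists b', pmul (0, oddspread b) f = (0, oddspread b')) /\
  (forall b b' : nat -> R, pmul (0, oddspread b) (0, oddspread b')
                = (0, oddspread (fun i => b i * b' i))) /\
  (* J_star(X)~ is a subalgebra of J_star(W), isomorphic as an algebra to J_star(X) *)
  (forall (t t' : R) (b b' : nat -> R),
     pmul (t, pairspread b) (t', pairspread b')
     = ((pmul (t, b) (t', b')).1, pairspread (pmul (t, b) (t', b')).2)) /\
  (* J_star(W) = Y~ (+) J_star(X)~ *)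
  (forall f : R * (nat -> R), f.1 = (Rop f).1 + (Sop f).1 /\
             forall k, f.2 k = (Rop f).2 k + (Sop f).2 k) /\
  (forall (b : nat -> R) (t : R) (d : nat -> R), (0, oddspread b) = (t, pairspread d) ->
     t = 0 /\ forall i, b i = 0 /\ d i = 0).
Proof.
have [C C_gt0 rdC] := right_dominantP Hrd.
have K_gt0 : 0 < 1 + 2 * C by rewrite ltr_wpDr ?mulr_ge0 ?ltW.
have K'_gt0 : 0 < 2 + 2 * C by rewrite ltr_wpDr ?mulr_ge0 ?ltW.
split; first exact (dspread_equiv HX C_gt0 rdC).
split; first by exists (1 + 2 * C); split=> // a; apply: JW_Qop_le.
split; first exact: Qop_dspread.
split; first exact (espread_equiv HX C_gt0 rdC).
split; first exact: subr_Qop.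
split; first by move=> n c b cn0 _; eexists; apply: jmul_dspread.
split; first exact: jmul_dspreadM.
split; first by move=> m a b _ _; apply: jmul_espread.
split; first exact: dspread_eq_espread.
split; first exact (oddspread_equiv HX C_gt0 rdC).
split; first by exists (1 + 2 * C); split=> // f; apply: Jsnorm_Rop_le.
split; first exact: Rop_oddspread.
split; first by exists (2 + 2 * C); split=> // t b; apply: pairspread_equiv.
split; first by exists (2 + 2 * C); split=> // f; apply: Jsnorm_Sop_le.
split; first exact: Sop_pairspread.
split; first by case.
split; first by move=> b f; eexists; apply: pmul_oddspreadl.
split; first exact: pmul_oddspread.
split; first by [].
split; first exact: Rop_add_Sop.
exact: oddspread_eq_pairspread.
Qed.
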